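(* Let $A,M\in\mathbb{C}^{n\times n}$ be Hermitian with $M$ positive definite, and let the eigenvalues of the pair $(A,M)$ be $\lambda_1<\lambda_2\le\cdots\le\lambda_n$. Put $A_{\lambda_1}=A-\lambda_1 M$. Let $T\in\mathbb{C}^{n\times n}$ be Hermitian positive definite. Let $x^{(0)}\in\mathbb{C}^n$ be neither an eigenvector of $(A,M)$ associated with $\lambda_1$ nor $M$-orthogonal to the eigenspace associated with $\lambda_1$, and let $x^{(0)},x^{(1)},\ldots$ be the iterates of the following heuristic preconditioned CG iteration (for as long as it is defined): set $r^{(0)}=-A_{\lambda_1}x^{(0)}$, $\gamma^{(0)}=(Tr^{(0)})^*r^{(0)}$, $p^{(0)}=Tr^{(0)}$, and for $i=0,1,\ldots$: $w=A_{\lambda_1}p^{(i)}$, $\delta=\gamma^{(i)}/(w^*p^{(i)})$, $x^{(i+1)}=x^{(i)}+\delta p^{(i)}$, $r^{(i+1)}=r^{(i)}-\delta w$, $\gamma^{(i+1)}=(Tr^{(i+1)})^*r^{(i+1)}$, $p^{(i+1)}=Tr^{(i+1)}+(\gamma^{(i+1)}/\gamma^{(i)})p^{(i)}$. Define $B=T^{1/2}A_{\lambda_1}T^{1/2}$ and let $V$ be an arbitrary matrix whose columns form an orthonormal basis of the image $\operatorname{im}(B)$. Then the vectors $\tilde{x}^{(i)}=V^*T^{-1/2}x^{(i)}$, $i=0,1,\ldots$, are the iterates of the standard (non-preconditioned) conjugate gradient method applied to the linear system $\tilde{B}\tilde{x}=0$ with $\tilde{B}=V^*BV$ and initial guess 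$\tilde{x}^{(0)}$.
   Context: $T^{1/2}$ denotes the Hermitian positive definite square root of $T$. The asterisk denotes the conjugate transpose. *)

From HB Require Import structures.
From mathcomp Require Import all_boot all_order all_algebra.
From mathcomp Require Import reals.
From mathcomp Require Import complex.
Set Implicit Arguments. Unset Strict Implicit. Unset Printing Implicit Defensive.
Import Order.TTheory GRing.Theory Num.Theory.
Local Open Scope ring_scope.

Section Defs.
Variable R : realType.
Local Notation C := R[i].

Definition ctmx (m n : nat) (A : 'M[C]_(m, n)) : 'M[C]_(n, m) :=
  (map_mx (fun z : C => z^*) A)^T.

Definition cdot (n : nat) (u v : 'cV[C]_n) : C := (ctmx u *m v) 0 0.

Definition herm_mx (n : nat) (A : 'M[C]_n) : Prop := ctmx A = A.

Definition hpd (n : nat) (A : 'M[C]_n) : Prop :=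
  herm_mx A /\ forall x : 'cV[C]_n, x != 0 -> 0 < cdot x (A *m x).

(* characteristic polynomial det(A - t M) of the pencil (A, M); its roots,
   counted with multiplicity, are the eigenvalues of the pair (A, M) *)
Definition pencil_poly (n : nat) (A M : 'M[C]_n) : {poly C} :=
  \det (map_mx polyC A - 'X *: map_mx polyC M).

Definition cgstate (n : nat) := ('cV[C]_n * 'cV[C]_n * 'cV[C]_n * C)%type.

Definition pcg_step (n : nat) (K T : 'M[C]_n) (s : cgstate n) : cgstate n :=
  let: (x, r, p, g) := s in
  let w := K *m p in
  let d := g / cdot w p in
  let x' := x + d *: p in
  let r' := r - d *: w in
  let g' := cdot (T *m r') r' in
  let p' := T *m r' + (g' / g) *: p in
  (x', r', p', g').

Definition pcg_init (n : nat) (K T : 'M[C]_n) (x0 : 'cV[C]_n) : cgstate n :=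
  let r0 := - (K *m x0) in (x0, r0, T *m r0, cdot (T *m r0) r0).

Definition pcg (n : nat) (K T : 'M[C]_n) (x0 : 'cV[C]_n) (i : nat) : cgstate n :=
  iter i (pcg_step K T) (pcg_init K T x0).

Definition pcg_x n (K T : 'M[C]_n) x0 i : 'cV[C]_n := (pcg K T x0 i).1.1.1.
Definition pcg_p n (K T : 'M[C]_n) x0 i : 'cV[C]_n := (pcg K T x0 i).1.2.
Definition pcg_g n (K T : 'M[C]_n) x0 i : C := (pcg K T x0 i).2.

(* the iterates x^(0..k) are defined: all denominators used are nonzero *)
Definition pcg_defined n (K T : 'M[C]_n) x0 (k : nat) : Prop :=
  forall i, (i < k)%N ->
    cdot (K *m pcg_p K T x0 i) (pcg_p K T x0 i) != 0 /\
    ((i.+1 < k)%N -> pcg_g K T x0 i != 0).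

Definition cg_step (n : nat) (K : 'M[C]_n) (s : cgstate n) : cgstate n :=
  let: (x, r, p, g) := s in
  let w := K *m p in
  let a := g / cdot p w in
  let x' := x + a *: p in
  let r' := r - a *: w in
  let g' := cdot r' r' in
  let p' := r' + (g' / g) *: p in
  (x', r', p', g').

Definition cg_init (n : nat) (K : 'M[C]_n) (x0 : 'cV[C]_n) : cgstate n :=
  let r0 := - (K *m x0) in (x0, r0, r0, cdot r0 r0).

Definition cg (n : nat) (K : 'M[C]_n) (x0 : 'cV[C]_n) (i : nat) : cgstate n :=
  iter i (cg_step K) (cg_init K x0).

Definition cg_x n (K : 'M[C]_n) x0 i : 'cV[C]_n := (cg K x0 i).1.1.1.
Definition cg_p n (K : 'M[C]_n) x0 i : 'cV[C]_n := (cg K x0 i).1.2.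
Definition cg_g n (K : 'M[C]_n) x0 i : C := (cg K x0 i).2.

Definition cg_defined n (K : 'M[C]_n) x0 (k : nat) : Prop :=
  forall i, (i < k)%N ->
    cdot (cg_p K x0 i) (K *m cg_p K x0 i) != 0 /\
    ((i.+1 < k)%N -> cg_g K x0 i != 0).

End Defs.

From mathcomp Require Import all_boot all_order all_algebra.
From mathcomp Require Import reals.
From mathcomp Require Import complex.
Import Order.TTheory GRing.Theory Num.Theory.
Local Open Scope ring_scope.
Set Implicit Arguments. Unset Strict Implicit.

(* Write K = A - l1 M, B = S K S with S = T^{1/2}, and P = V V^*,
   the orthogonal projector onto im(B).  The map
     (x, r, p, gamma) |-> (V^* S^-1 x, V^* S r, V^* S^-1 p, gamma)
   sends each state of preconditioned CG for K to the corresponding state of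
   plain CG for V^* B V, as long as S r and S^-1 p stay in im(B): on that
   subspace V^* is an isometry, V^* B V (V^* S^-1 p) = V^* S K p, and both
   inner products gamma and p^* K p are preserved.  The invariant holds
   initially and is preserved because every update adds a multiple of
   S K p = B S^-1 p or of S^-1 T r = S r.  K is Hermitian, which gives
   B P = B, because l1, an eigenvalue of a Hermitian definite pencil, is
   real. *)

Section ConjugateTranspose.
Variable R : realType.
Local Notation C := R[i].

Lemma ctmxE m n (A : 'M[C]_(m, n)) i j : ctmx A i j = (A j i)^*.
Proof. by rewrite /ctmx !mxE. Qed.

Lemma ctmxK m n (A : 'M[C]_(m, n)) : ctmx (ctmx A) = A.
Proof. by apply/matrixP => i j; rewrite !ctmxE conjCK. Qed.

Lemma ctmxM m n p (A : 'M[C]_(m, n)) (B : 'M[C]_(n, p)) :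
  ctmx (A *m B) = ctmx B *m ctmx A.
Proof. by rewrite /ctmx map_mxM trmx_mul. Qed.

Lemma ctmx0 m n : ctmx (0 : 'M[C]_(m, n)) = 0.
Proof. by apply/matrixP => i j; rewrite ctmxE !mxE rmorph0. Qed.

Lemma ctmx1 n : ctmx (1%:M : 'M[C]_n) = 1%:M.
Proof. by apply/matrixP => i j; rewrite ctmxE !mxE eq_sym conjC_nat. Qed.

Lemma ctmxB m n (A B : 'M[C]_(m, n)) : ctmx (A - B) = ctmx A - ctmx B.
Proof. by apply/matrixP => i j; rewrite !ctmxE !mxE rmorphB. Qed.

Lemma ctmxZ m n a (A : 'M[C]_(m, n)) : ctmx (a *: A) = a^* *: ctmx A.
Proof. by apply/matrixP => i j; rewrite !ctmxE !mxE rmorphM. Qed.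

Lemma conj_cdot n (u v : 'cV[C]_n) : (cdot u v)^* = cdot v u.
Proof. by rewrite /cdot -ctmxE ctmxM ctmxK. Qed.

Lemma cdot0l n (v : 'cV[C]_n) : cdot 0 v = 0.
Proof. by rewrite /cdot ctmx0 mul0mx mxE. Qed.

Lemma cdotZr n a (u v : 'cV[C]_n) : cdot u (a *: v) = a * cdot u v.
Proof. by rewrite /cdot -scalemxAr mxE. Qed.

Lemma cdot_mulmxl m n (A : 'M[C]_(m, n)) (u : 'cV[C]_n) (v : 'cV[C]_m) :
  cdot (A *m u) v = cdot u (ctmx A *m v).
Proof. by rewrite /cdot ctmxM mulmxA. Qed.

Lemma hpd_unitmx n (S : 'M[C]_n) : hpd S -> S \in unitmx.
Proof.
case=> HS Spos; rewrite unitmxE unitfE; apply/negP => /det0P [v v_neq0 vS0].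
have : ctmx v != 0.
  by apply: contraNneq v_neq0 => v0; rewrite -[v]ctmxK v0 ctmx0.
move/Spos; rewrite -{1}HS -ctmxM vS0 ctmx0.
by rewrite /cdot mulmx0 mxE ltxx.
Qed.

Lemma herm_mx_invmx n (S : 'M[C]_n) :
  S \in unitmx -> herm_mx S -> herm_mx (invmx S).
Proof.
move=> Su HS; rewrite /herm_mx -[LHS]mulmx1 -(mulmxV Su) mulmxA.
by rewrite -[X in ctmx _ *m X *m _]HS -ctmxM mulmxV // ctmx1 mul1mx.
Qed.

Lemma herm_mx_mulmx n (S K : 'M[C]_n) :
  herm_mx S -> herm_mx K -> herm_mx (S *m K *m S).
Proof. by move=> HS HK; rewrite /herm_mx !ctmxM HS HK mulmxA. Qed.

Lemma pencil_eigenvalue_real n (A M : 'M[C]_n) l (y : 'cV[C]_n) :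
  herm_mx A -> hpd M -> y != 0 -> (A - l *: M) *m y = 0 -> l^* = l.
Proof.
move=> HA [HM Mpos] y_neq0 Ky0.
have Ay : A *m y = l *: (M *m y).
  by apply/eqP; rewrite -subr_eq0 scalemxAl -mulmxBl Ky0.
have yMy_real : (cdot y (M *m y))^* = cdot y (M *m y).
  by rewrite conj_cdot cdot_mulmxl HM.
have : (cdot y (A *m y))^* = cdot y (A *m y).
  by rewrite conj_cdot cdot_mulmxl HA.
rewrite Ay cdotZr => lyMy_real.
apply: (mulIf (lt0r_neq0 (Mpos _ y_neq0))).
by rewrite -lyMy_real -{1}yMy_real rmorphM.
Qed.

Lemma herm_mx_pencil n (A M : 'M[C]_n) l :
  herm_mx A -> herm_mx M -> l^* = l -> herm_mx (A - l *: M).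
Proof. by move=> HA HM Hl; rewrite /herm_mx ctmxB ctmxZ HA HM Hl. Qed.

Lemma orthonormal_basis_projector m n (V : 'M[C]_(n, m)) (B : 'M[C]_n) :
  ctmx V *m V = 1%:M -> (B^T <= V^T)%MS -> V *m ctmx V *m B = B.
Proof.
move=> HV /submxP [D BVD].
have -> : B = V *m D^T by rewrite -[B]trmxK BVD trmx_mul trmxK.
by rewrite -mulmxA (mulmxA (ctmx V)) HV mul1mx.
Qed.

Lemma mulmx_projector_herm m n (V : 'M[C]_(n, m)) (B : 'M[C]_n) :
  herm_mx B -> V *m ctmx V *m B = B -> B *m (V *m ctmx V) = B.
Proof.
move=> HB PB; apply: (can_inj (@ctmxK n n)).
by rewrite ctmxM HB ctmxM ctmxK PB.
Qed.

End ConjugateTranspose.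

Section PcgAsCg.
Variables (R : realType) (n m : nat).
Local Notation C := R[i].
Variables (K T S : 'M[C]_n) (V : 'M[C]_(n, m)).
Hypotheses (HK : herm_mx K) (HS : herm_mx S) (Su : S \in unitmx).
Hypothesis ST : S *m S = T.
Hypothesis PB : V *m ctmx V *m (S *m K *m S) = S *m K *m S.

Local Notation Si := (invmx S).
Local Notation Bt := (ctmx V *m (S *m K *m S) *m V).

Definition in_range (u : 'cV[C]_n) : Prop := V *m (ctmx V *m u) = u.

Definition pcg_in_range (s : cgstate R n) : Prop :=
  let: (_, r, p, _) := s in in_range (S *m r) /\ in_range (Si *m p).

Definition cg_of_pcg (s : cgstate R n) : cgstate R m :=
  let: (x, r, p, g) := s in
  (ctmx V *m Si *m x, ctmx V *m S *m r, ctmx V *m Si *m p, g).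

Lemma invmx_mulT (r : 'cV[C]_n) : Si *m (T *m r) = S *m r.
Proof. by rewrite -ST -!mulmxA (mulmxA Si) mulVmx ?mul1mx. Qed.

Lemma mulmx_SK (u : 'cV[C]_n) : S *m (K *m u) = S *m K *m S *m (Si *m u).
Proof. by rewrite -!mulmxA (mulmxA S Si) mulmxV ?mul1mx. Qed.

Lemma in_range_SK (u : 'cV[C]_n) : in_range (S *m (K *m u)).
Proof. by rewrite /in_range mulmx_SK (mulmxA (ctmx V)) !(mulmxA V) PB. Qed.

Lemma in_rangeB (u v : 'cV[C]_n) a :
  in_range u -> in_range v -> in_range (u - a *: v).
Proof. by rewrite /in_range !mulmxBr -!scalemxAr => -> ->. Qed.

Lemma in_rangeD (u v : 'cV[C]_n) a :
  in_range u -> in_range v -> in_range (u + a *: v).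
Proof. by rewrite /in_range !mulmxDr -!scalemxAr => -> ->. Qed.

Lemma B_mulmx_projector : S *m K *m S *m (V *m ctmx V) = S *m K *m S.
Proof. exact: mulmx_projector_herm (herm_mx_mulmx HS HK) PB. Qed.

Lemma mulBt_cg_of_pcg (p : 'cV[C]_n) :
  Bt *m (ctmx V *m Si *m p) = ctmx V *m S *m (K *m p).
Proof.
rewrite -(mulmxA (ctmx V) Si) -(mulmxA _ V) (mulmxA V) -(mulmxA (ctmx V)).
by rewrite (mulmxA (S *m K *m S)) B_mulmx_projector -mulmx_SK mulmxA.
Qed.

Lemma cdot_residual_cg_of_pcg (r : 'cV[C]_n) : in_range (S *m r) ->
  cdot (ctmx V *m S *m r) (ctmx V *m S *m r) = cdot (T *m r) r.
Proof.
move=> Hr; rewrite -!mulmxA /cdot ctmxM ctmxK -mulmxA Hr.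
by rewrite -ST !ctmxM HS !mulmxA.
Qed.

Lemma cdot_direction_cg_of_pcg (p : 'cV[C]_n) : in_range (Si *m p) ->
  cdot (ctmx V *m Si *m p) (Bt *m (ctmx V *m Si *m p)) = cdot (K *m p) p.
Proof.
move=> Hp; rewrite mulBt_cg_of_pcg -!(mulmxA (ctmx V)) -cdot_mulmxl Hp.
rewrite cdot_mulmxl HK [LHS]cdot_mulmxl (herm_mx_invmx Su HS).
by rewrite mulmxA mulVmx // mul1mx.
Qed.

Lemma pcg_init_in_range x0 : pcg_in_range (pcg_init K T x0).
Proof. by split; rewrite ?invmx_mulT -mulmxN; apply: in_range_SK. Qed.

Lemma cg_init_of_pcg x0 :
  cg_init Bt (ctmx V *m Si *m x0) = cg_of_pcg (pcg_init K T x0).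
Proof.
have [Hr _] := pcg_init_in_range x0.
rewrite /cg_init /pcg_init /= mulmxN mulBt_cg_of_pcg -mulmxN.
rewrite cdot_residual_cg_of_pcg //.
by rewrite -(mulmxA _ Si (T *m _)) invmx_mulT mulmxA.
Qed.

Lemma pcg_step_in_range s : pcg_in_range s -> pcg_in_range (pcg_step K T s).
Proof.
case: s => [[[x r] p] g] [Hr Hp] /=; set d := _ / _.
have Hr' : in_range (S *m (r - d *: (K *m p))).
  by rewrite mulmxBr -scalemxAr; apply: in_rangeB Hr (in_range_SK _).
by split; rewrite // mulmxDr -scalemxAr invmx_mulT; apply: in_rangeD.
Qed.

Lemma cg_step_of_pcg s : pcg_in_range s ->
  cg_step Bt (cg_of_pcg s) = cg_of_pcg (pcg_step K T s).
Proof.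
case: s => [[[x r] p] g] Hs; have [Hr' _] := pcg_step_in_range Hs.
case: Hs Hr' => [Hr Hp] /= Hr'.
rewrite cdot_direction_cg_of_pcg // mulBt_cg_of_pcg.
set d := g / _; set r' := r - d *: (K *m p).
have -> : ctmx V *m S *m r - d *: (ctmx V *m S *m (K *m p)) = ctmx V *m S *m r'.
  by rewrite mulmxBr scalemxAr.
rewrite cdot_residual_cg_of_pcg //.
congr (_, _, _, _); rewrite mulmxDr scalemxAr //.
by rewrite -(mulmxA _ Si (T *m _)) invmx_mulT mulmxA.
Qed.

Lemma cg_of_pcg_iter x0 i :
  pcg_in_range (pcg K T x0 i) /\
  cg Bt (ctmx V *m Si *m x0) i = cg_of_pcg (pcg K T x0 i).
Proof.
elim: i => [|i [Hi IHi]].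
  by split; [apply: pcg_init_in_range | apply: cg_init_of_pcg].
rewrite /pcg /cg !iterS -/(pcg K T x0 i) -/(cg _ _ i) IHi.
by split; [apply: pcg_step_in_range | apply: cg_step_of_pcg].
Qed.

Lemma cg_x_of_pcg x0 i :
  ctmx V *m Si *m pcg_x K T x0 i = cg_x Bt (ctmx V *m Si *m x0) i.
Proof.
by rewrite /cg_x (cg_of_pcg_iter x0 i).2 /pcg_x; case: (pcg K T x0 i) => [[[]]].
Qed.

Lemma cg_defined_of_pcg x0 k :
  pcg_defined K T x0 k -> cg_defined Bt (ctmx V *m Si *m x0) k.
Proof.
move=> Hdef i ik; have [Hi cgE] := cg_of_pcg_iter x0 i.
move: (Hdef i ik); rewrite /cg_p /cg_g cgE /pcg_p /pcg_g.
case: (pcg K T x0 i) Hi => [[[x r] p] g] [_ Hp] /=.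
by rewrite cdot_direction_cg_of_pcg.
Qed.

End PcgAsCg.

Theorem lemma2p1 (R : realType) (n : nat) (A M T S : 'M[R[i]]_n) (l1 : R[i])
  (x0 : 'cV[R[i]]_n) (m : nat) (V : 'M[R[i]]_(n, m)) :
  herm_mx A -> hpd M ->
  (* l1 is an eigenvalue of (A, M), it is the smallest one and it is simple *)
  root (pencil_poly A M) l1 ->
  (forall mu : R[i], root (pencil_poly A M) mu -> l1 <= mu) ->
  mup l1 (pencil_poly A M) = 1%N ->
  hpd T ->
  (* S = T^{1/2}: the Hermitian positive definite square root of T *)
  hpd S -> S *m S = T ->
  (* x0 is not an eigenvector associated with l1 *)
  ~ (x0 != 0 /\ (A - l1 *: M) *m x0 = 0) ->
  (* x0 is not M-orthogonal to the eigenspace associated with l1 *)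
  (exists y : 'cV[R[i]]_n, (A - l1 *: M) *m y = 0 /\ cdot y (M *m x0) != 0) ->
  (* columns of V form an orthonormal basis of im(B), B = S (A - l1 M) S *)
  ctmx V *m V = 1%:M ->
  (V^T == (S *m (A - l1 *: M) *m S)^T)%MS ->
  forall k : nat, pcg_defined (A - l1 *: M) T x0 k ->
    let Bt := ctmx V *m (S *m (A - l1 *: M) *m S) *m V in
    let xt0 := ctmx V *m invmx S *m x0 in
    cg_defined Bt xt0 k /\
    forall i, (i <= k)%N ->
      ctmx V *m invmx S *m pcg_x (A - l1 *: M) T x0 i = cg_x Bt xt0 i.
Proof.
move=> HA HM _ _ _ _ HS ST _ [y [Ky0 yMx0]] HV /andP[_ HBV] k Hdef Bt xt0.
have y_neq0 : y != 0 by apply: contraNneq yMx0 => ->; rewrite cdot0l.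
have HK := herm_mx_pencil HA HM.1 (pencil_eigenvalue_real HA HM y_neq0 Ky0).
have PB := orthonormal_basis_projector HV HBV.
have Su := hpd_unitmx HS.
split; first exact: cg_defined_of_pcg HK HS.1 Su ST PB x0 k Hdef.
by move=> i _; apply: cg_x_of_pcg HK HS.1 Su ST PB x0 i.
Qed.
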